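(* Assume the General Content Request Model with the $R$-rarity condition for $R=\|\mathbf L\|_\infty$, and fix constant TTL vectors $\boldsymbol\theta\preccurlyeq\mathbf L$, $\boldsymbol\theta^s\preccurlyeq\mathbf L$. For f-TTL with these fixed TTLs, $$\lim_{n\to\infty}\frac1n\sum_{l=1}^n\mathbb 1\big(c(l)\notin\mathcal K,\ Y(l)=1\big)=0\quad\text{almost surely},$$ i.e. the fraction of requests that are hits on rare objects vanishes almost surely.
   Context: Standing model (General Content Request Model). Finitely many types $t\in[T]$; each type has a finite set $\mathcal K_t$ of recurrent objects and a countable set $\mathcal R_t$ of rare objects; $\mathcal K=\bigcup_t\mathcal K_t$, $K=|\mathcal K|$, recurrent objects labeled $1,\dots,K$. Requests arrive at times $A(l)$, $A(0)=0$, with i.i.d. inter-arrival times independent of labels, having a density that is absolutely continuous w.r.t. Lebesgue measure, with connected support and finite nonzero mean. A Markov chain $Z(l)$ on $\{1,\dots,K+T\}$, irreducible with $P(c,c)>0$ for all $c$, determines labels: $Z(l)=k\le K$ means request $l$ is for recurrent object $k$; $Z(l)=K+t$ means some rare object of type $t$ (arbitrary subject to the rarity condition). $c(l)$ is the object of request $l$. $X_{pre}(l)=\min\{A(l)-A(l'):l'<l,c(l')=c(l)\}$ ($\min\emptyset=\infty$), $\beta_t(l;R)=\mathbb 1(c(l)\in\mathcal R_t,X_{pre}(l)<R)$; $R$-rarity condition: for every $t$ and every $N_m$ with $N_m/\sqrt m\to\infty$, $\frac1{N_m}\sum_{l=m}^{m+N_m}\beta_t(l;R)\to0$ a.s. f-TTL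 with fixed TTLs $(\boldsymbol\theta,\boldsymbol\theta^s)$: deep cache, shallow cache, shadow cache (metadata only). Each object $c$ has timers $(\psi^0_c,\psi^1_c,\psi^2_c)$ decreasing at unit rate (floored at $0$); $c$ is in the deep cache while $\psi^0_c>0$, in the shallow cache while $\psi^1_c>0$, its metadata in the shadow cache while $\psi^2_c>0$. A request for $c$ of type $t$ is a hit ($Y(l)=1$) if $c$ is in the deep or shallow cache, a virtual hit if not but its metadata is in the shadow cache, and a miss otherwise ($Y(l)=0$ for virtual hits and misses); on a hit or virtual hit the timers are set to $(\theta_t,0,0)$, on a miss to $(0,\theta^s_t,\theta_t)$. *)

From HB Require Import structures.
From mathcomp Require Import all_boot all_order all_algebra.
From mathcomp Require Import all_classical all_reals all_analysis.
Set Implicit Arguments. Unset Strict Implicit. Unset Printing Implicit Defensive.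
Import Order.TTheory GRing.Theory Num.Theory.
Import numFieldNormedType.Exports.
Local Open Scope classical_set_scope.
Local Open Scope ring_scope.

(* Objects: recurrent objects 'I_K (object k has type [ty k]) and rare objects
   of type t, indexed by (t, j) with j : nat (the countable set R_t). *)
Definition obj (K T : nat) : Type := ('I_K + ('I_T * nat))%type.

Definition is_rare K T (o : obj K T) : bool := if o is inr _ then true else false.
Definition is_rare_of K T (t : 'I_T) (o : obj K T) : bool :=
  if o is inr p then p.1 == t else false.

Definition objtype K T (ty : 'I_K -> 'I_T) (o : obj K T) : 'I_T :=
  match o with inl k => ty k | inr p => p.1 end.

Section FTTL.
Variables (R : realType) (K T : nat) (ty : 'I_K -> 'I_T).
Variables (theta thetas : 'I_T -> R).

(* timers (psi0, psi1, psi2) *)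
Definition timers := (R * R * R)%type.
Definition tm0 : timers := (0, 0, 0).

Definition decay (dt : R) (x : timers) : timers :=
  (Num.max (x.1.1 - dt) 0, Num.max (x.1.2 - dt) 0, Num.max (x.2 - dt) 0).

(* hit: object in the deep or shallow cache *)
Definition in_cache (x : timers) : bool := (0 < x.1.1) || (0 < x.1.2).
Definition in_shadow (x : timers) : bool := 0 < x.2.

Definition new_timers (t : 'I_T) (x : timers) : timers :=
  if in_cache x || in_shadow x then (theta t, 0, 0)
  else (0, thetas t, theta t).

Definition update (st : obj K T -> timers) (o : obj K T) : obj K T -> timers :=
  fun o' => if o' == o then new_timers (objtype ty o) (st o) else st o'.

Variables (A : nat -> R) (c : nat -> obj K T).

Fixpoint ttl_after (l : nat) : obj K T -> timers :=
  match l with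
  | 0 => update (fun _ => tm0) (c 0)
  | l'.+1 => update (fun o => decay (A l'.+1 - A l') (ttl_after l' o)) (c l'.+1)
  end.

Definition ttl_before (l : nat) : obj K T -> timers :=
  match l with
  | 0 => fun _ => tm0
  | l'.+1 => fun o => decay (A l'.+1 - A l') (ttl_after l' o)
  end.

Definition Yhit (l : nat) : bool := in_cache (ttl_before l (c l)).

Definition Xpre (l : nat) : \bar R :=
  \big[Order.min/+oo%E]_(l' < l | c l' == c l) ((A l - A l')%:E).

Definition beta (t : 'I_T) (l : nat) (r : R) : bool :=
  is_rare_of t (c l) && (Xpre l < r%:E)%E.
End FTTL.

Definition supnorm (R : realType) (T : nat) (L : 'I_T -> R) : R :=
  \big[Num.max/0]_(t < T) `|L t|.

Definition density_support (R : realType) (f : R -> R) : set R :=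
  [set x | forall e : R, 0 < e ->
     (0 < \int[@lebesgue_measure R]_(y in ball x e) (f y)%:E)%E].

Definition irreducible (R : realType) (n : nat) (Pm : 'I_n -> 'I_n -> R) : Prop :=
  forall a b : 'I_n, exists s : seq 'I_n,
    path (fun x y => 0 < Pm x y) a s /\ last a s = b.

From HB Require Import structures.
From mathcomp Require Import all_boot all_order all_algebra.
From mathcomp Require Import all_classical all_reals all_analysis.
From mathcomp Require Import ring lra zify.
Import Order.TTheory GRing.Theory Num.Theory.
Import numFieldNormedType.Exports.
Local Open Scope classical_set_scope.
Local Open Scope ring_scope.
Set Implicit Arguments. Unset Strict Implicit. Unset Printing Implicit Defensive.

(* All TTLs are at most S = ||L||_oo, and the arrival times are almost surely
   nondecreasing because the inter-arrival density vanishes on the negative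
   reals.  Then a positive cache timer of an object o at time a was set by an
   earlier request l0 for o and runs out by A(l0) + S, so a hit at request l
   forces X_pre(l) < S; for a rare object of type t this is beta_t(l; S) = 1.
   As m^2 / sqrt m -> oo, the rarity condition applies to the windows
   [m, m + m^2], and covering [1, n] by [1, k) and [k, k + k^2] with
   k = ceil(sqrt n) turns these window averages into Cesaro averages. *)

Lemma le_supnorm (R : realType) (T : nat) (L : 'I_T -> R) t : L t <= supnorm L.
Proof. by apply: le_trans (ler_norm _) _; apply: (bigmax_sup t). Qed.

Section TimerExpiry.
Variables (R : realType) (K T : nat) (ty : 'I_K -> 'I_T).
Variables (theta thetas : 'I_T -> R) (S : R).
Hypothesis theta_le : forall t, theta t <= S.
Hypothesis thetas_le : forall t, thetas t <= S.
Variables (A : nat -> R) (c : nat -> obj K T).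
Hypothesis A_nondecr : forall l, A l <= A l.+1.

Definition expires_by (n : nat) (a : R) (o : obj K T) (v : R) :=
  0 < v -> exists2 l0, (l0 < n)%N & c l0 = o /\ a + v <= A l0 + S.

Definition cache_expires_by n a o (x : timers R) :=
  expires_by n a o x.1.1 /\ expires_by n a o x.1.2.

Lemma expires_by_TTL l v : v <= S -> expires_by l.+1 (A l) (c l) v.
Proof. by move=> vS _; exists l => //; split => //; rewrite lerD2l. Qed.

Lemma expires_by0 n a o : expires_by n a o 0.
Proof. by rewrite /expires_by ltxx. Qed.

Lemma cache_expires_by_new_timers l t x :
  cache_expires_by l.+1 (A l) (c l) (new_timers theta thetas t x).
Proof.
rewrite /new_timers; case: ifP => _; split;
  by [apply: expires_by0 | apply/expires_by_TTL/theta_le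
                         | apply/expires_by_TTL/thetas_le].
Qed.

Lemma expires_by_widen n n' a o v : (n <= n')%N ->
  expires_by n a o v -> expires_by n' a o v.
Proof.
by move=> nn' exp_v /exp_v [l0 l0n hl0]; exists l0 => //; apply: leq_trans nn'.
Qed.

Lemma expires_by_decay n a a' o v : a <= a' ->
  expires_by n a o v -> expires_by n a' o (Num.max (v - (a' - a)) 0).
Proof.
move=> aa' exp_v; rewrite /expires_by lt_max ltxx orbF => v'_gt0.
have [|l0 ln [co le_S]] := exp_v; first lra.
exists l0 => //; split => //; rewrite max_l; lra.
Qed.

Lemma cache_expires_by_after l o :
  cache_expires_by l.+1 (A l) o (ttl_after ty theta thetas A c l o).
Proof.
elim: l o => [|l IH] o /=; rewrite /update; case: eqP => [->|_];
  try exact: cache_expires_by_new_timers.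
  by split; apply: expires_by0.
have [exp1 exp2] := IH o.
by split; apply/(expires_by_widen (leqnSn _))/(expires_by_decay (A_nondecr l)).
Qed.

Lemma Xpre_lt_of_Yhit l : Yhit ty theta thetas A c l -> (Xpre A c l < S%:E)%E.
Proof.
case: l => [|l]; first by rewrite /Yhit /= /in_cache ltxx.
have Xpre_lt v : expires_by l.+1 (A l.+1) (c l.+1) v -> 0 < v ->
    (Xpre A c l.+1 < S%:E)%E.
  move=> exp_v v_gt0; have [l0 l0l [cl0 le_S]] := exp_v v_gt0.
  rewrite /Xpre; apply: le_lt_trans (bigmin_le_cond _ (j := Ordinal l0l) _ _) _.
    by rewrite /= cl0.
  by rewrite lte_fin; lra.
have [exp1 exp2] := cache_expires_by_after l (c l.+1).
by case/orP => /Xpre_lt; apply; apply: (expires_by_decay (A_nondecr l)).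
Qed.

Lemma rare_hit_beta l : is_rare (c l) -> Yhit ty theta thetas A c l ->
  beta A c (objtype ty (c l)) l S.
Proof.
rewrite /beta /is_rare /is_rare_of => + /Xpre_lt_of_Yhit ->.
by case: (c l) => // -[t j] _ /=; rewrite andbT.
Qed.
End TimerExpiry.

Lemma sum_prefix_le_window (u : nat -> bool) (v : nat -> nat) n k :
  (forall l, u l <= v l)%N -> (0 < k)%N -> (n <= k * k)%N ->
  (\sum_(1 <= l < n.+1) u l <= k.-1 + \sum_(k <= l < (k + k * k).+1) v l)%N.
Proof.
move=> u_le_v k_gt0 n_le.
apply: (@leq_trans (\sum_(1 <= l < (k + k * k).+1) u l)).
  by rewrite [leqRHS](@big_cat_nat _ _ _ n.+1) //=; lia.
rewrite (@big_cat_nat _ _ _ k) //=; last lia.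
apply: leq_add; last exact: leq_sum.
apply: (@leq_trans (\sum_(1 <= l < k) 1)); first by apply: leq_sum => l _; exact: leq_b1.
by rewrite sum_nat_const_nat muln1; lia.
Qed.

Lemma sqrt_ceil n : (0 < n)%N -> exists2 k, (n <= k * k)%N & (k.-1 * k.-1 < n)%N.
Proof.
move=> n_gt0; have ex_k : exists k, (n <= k * k)%N by exists n; nia.
case: (ex_minnP ex_k) => k n_le k_min; exists k => //.
by rewrite ltnNge; apply/negP => /k_min; lia.
Qed.

Lemma cesaro_cvg0_from_windows (R : realType) (I : finType) (u : nat -> bool)
    (b : I -> nat -> bool) :
  (forall l, u l -> exists i, b i l) ->
  (forall i, (fun m : nat => (m * m)%:R^-1 *
      \sum_(m <= l < (m + m * m).+1) (b i l)%:R : R) @ \oo --> 0) ->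
  (fun n : nat => n%:R^-1 * \sum_(1 <= l < n.+1) (u l)%:R : R) @ \oo --> 0.
Proof.
move=> u_covered windows; apply/cvgrPdist_le => eps eps_gt0.
(* With k * k <= 4 * n, the prefix [1, k) and each of the #|I| windows at k
   contribute at most e * n and 4 * e * n. *)
pose e := eps / (1 + 4 * #|I|%:R).
have e_gt0 : 0 < e by rewrite divr_gt0 // ltr_pwDl // mulr_ge0.
have [M _ windows_small] : \forall m \near \oo, forall i, (0 < m)%N ->
    (\sum_(m <= l < (m + m * m).+1) b i l)%:R <= e * (m * m)%:R :> R.
  apply: filter_forall => i.
  have /cvgrPdist_le/(_ e e_gt0) := windows i; apply: filterS => m.
  rewrite sub0r normrN ger0_norm ?mulr_ge0 ?sumr_ge0 // -natr_sum => le_e m_gt0.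
  by rewrite -ler_pdivrMr ?ltr0n ?muln_gt0 ?m_gt0 // mulrC.
pose B := Num.Def.archi_bound e^-1.
have e_B : 1 <= e * B%:R.
  have : e^-1 < B%:R by apply/archi_boundP; rewrite invr_ge0 ltW.
  by rewrite -(ltr_pM2l e_gt0) mulfV ?gt_eqF // => /ltW.
exists ((M + B + 2) * (M + B + 2))%N => // n /= n_large.
have n_gt0 : (0 < n)%N by nia.
have [k n_le kk_lt] := sqrt_ceil n_gt0.
have u_le l : (u l <= \sum_i b i l)%N.
  case: (boolP (u l)) => // /u_covered [i bi].
  by rewrite (bigD1 i) //= bi.
have k_gt0 : (0 < k)%N by nia.
rewrite sub0r normrN ger0_norm ?mulr_ge0 ?sumr_ge0 // mulrC ler_pdivrMr ?ltr0n //.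
rewrite -natr_sum; have := sum_prefix_le_window u_le k_gt0 n_le.
rewrite exchange_big /= -(ler_nat R) natrD natr_sum => /le_trans; apply.
have prefix_small : k.-1%:R <= e * n%:R :> R.
  apply: (@le_trans _ _ (k.-1%:R * (e * B%:R))); first by rewrite ler_peMr.
  by rewrite mulrCA -natrM ler_pM2l // ler_nat; nia.
have window_small i :
    (\sum_(k <= l < (k + k * k).+1) b i l)%:R <= e * (4 * n%:R) :> R.
  apply: le_trans (windows_small k _ i k_gt0) _; first by rewrite /=; nia.
  by rewrite ler_pM2l // -natrM ler_nat; nia.
rewrite natr_sum.
apply: le_trans (lerD prefix_small (ler_sum _ (fun i _ => window_small i))) _.
rewrite sumr_const -[X in _ + X]mulr_natr le_eqVlt; apply/predU1l; rewrite /e; field.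
by rewrite gt_eqF // ltr_pwDl // mulr_ge0.
Qed.

Lemma natr_sqr_div_sqrt_cvgy (R : realType) :
  (fun m : nat => (m * m)%:R / Num.sqrt m%:R : R) @ \oo --> +oo.
Proof.
apply/cvgryPge => r; near=> m.
have m_ge1 : 1 <= m%:R :> R by rewrite ler1n; near: m; exact: nbhs_infty_gt.
have sqrt_ge1 : 1 <= Num.sqrt m%:R :> R.
  by rewrite -[leLHS]sqrtr1 ler_sqrt.
have sqrt_le : Num.sqrt m%:R <= m%:R :> R.
  by rewrite -{2}(sqr_sqrtr (ler0n _ m)) expr2 ler_peMl // ltW.
apply: (@le_trans _ _ m%:R); first by near: m; exact: nbhs_infty_ger.
by rewrite ler_pdivlMr ?natrM ?ler_pM2l //; lra.
Unshelve. all: by end_near.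
Qed.

Lemma negligible_big_setU d (X : ringOfSetsType d) (R : realFieldType)
    (mu : {measure set X -> \bar R}) (I : Type) (r : seq I) (F : I -> set X) :
  (forall i, mu.-negligible (F i)) -> mu.-negligible (\big[setU/set0]_(i <- r) F i).
Proof.
by move=> F_null; elim/big_ind: _ => //; [exact: negligible_set0 | exact: negligibleU].
Qed.

Section ArrivalLaw.
Variables (R : realType) (d : measure_display) (Omega : measurableType d).
Variables (P : probability Omega R) (K T : nat).
Variables (A : nat -> Omega -> R) (Z : nat -> Omega -> 'I_(K + T)).
Variables (f : R -> R) (pi0 : 'I_(K + T) -> R) (Pm : 'I_(K + T) -> 'I_(K + T) -> R).
Hypothesis A_meas : forall l, measurable_fun setT (A l).
Hypothesis Z_meas : forall l (z : 'I_(K + T)), measurable (Z l @^-1` [set z]).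
Hypothesis f_neg : forall x, x < 0 -> f x = 0.

Definition law_event n (B : nat -> set R) (z : nat -> 'I_(K + T)) :=
  [set w | (forall i, (0 < i <= n)%N -> B i (A i w - A i.-1 w)) /\
           (forall i, (i <= n)%N -> Z i w = z i)].

Hypothesis law : forall n B z, (forall i, measurable (B i)) ->
  P (law_event n B z) = (\prod_(1 <= i < n.+1) \int[@lebesgue_measure R]_(x in B i) (f x)%:E
     * (pi0 (z 0%N) * \prod_(i < n) Pm (z i) (z i.+1))%:E)%E.

Lemma law_event_measurable n B z :
  (forall i, measurable (B i)) -> measurable (law_event n B z).
Proof.
move=> B_meas.
rewrite (_ : law_event n B z =
  \bigcap_(i in [set i | (0 < i <= n)%N]) ((A i \- A i.-1) @^-1` B i) `&`
  \bigcap_(i in [set i | (i <= n)%N]) (Z i @^-1` [set z i])).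
  apply: measurableI; apply: bigcap_measurableType => i _ //.
  by rewrite -[X in measurable X]setTI; apply: measurable_realfun.measurable_funB.
by apply/seteqP; split => w /= [incr labels]; split => i /=;
  by [apply: incr | apply: labels].
Qed.

Definition negative_at (l : nat) (i : nat) : set R :=
  if i == l then `]-oo, 0[%classic else setT.

Lemma negative_increment_null l z :
  P.-negligible (law_event l.+1 (negative_at l.+1) z).
Proof.
have B_meas i : measurable (negative_at l.+1 i).
  by rewrite /negative_at; case: ifP.
exists (law_event l.+1 (negative_at l.+1) z); split => //.
  exact: law_event_measurable.
rewrite law // big_nat_recr //= /negative_at eqxx integral0_eq ?mule0 ?mul0e //.
by move=> x; rewrite /= in_itv /= => /f_neg ->.
Qed.

Lemma arrivals_nondecreasing_ae l : \forall w \ae P, A l w <= A l.+1 w.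
Proof.
pose labels (s : {ffun 'I_l.+2 -> 'I_(K + T)}) i := s (inord i).
apply: (negligibleS _ (negligible_big_setU (enum {ffun 'I_l.+2 -> 'I_(K + T)})
  (fun s => negative_increment_null l (labels s)))).
move=> w /= /negP; rewrite -ltNge => decr.
rewrite -bigcup_seq; exists [ffun i : 'I_l.+2 => Z i w]; first by rewrite /= mem_enum.
split => i.
  case/andP => _ il; rewrite /negative_at; case: eqP => // ->.
  by rewrite /= in_itv /= subr_lt0.
by move=> il; rewrite /labels ffunE inordK.
Qed.
End ArrivalLaw.

Theorem mainTheorem5
  (R : realType) (d : measure_display) (Omega : measurableType d)
  (P : probability Omega R)
  (K T : nat) (ty : 'I_K -> 'I_T)
  (A : nat -> Omega -> R) (Z : nat -> Omega -> 'I_(K + T))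
  (c : nat -> Omega -> obj K T)
  (f : R -> R) (pi0 : 'I_(K + T) -> R) (Pm : 'I_(K + T) -> 'I_(K + T) -> R)
  (L theta thetas : 'I_T -> R)
  (* arrival times *)
  (hA0 : forall w, A 0%N w = 0)
  (hAmeas : forall l, measurable_fun setT (A l))
  (hZmeas : forall l (z : 'I_(K + T)), measurable (Z l @^-1` [set z]))
  (* inter-arrival density *)
  (hf_meas : measurable_fun setT f)
  (hf_ge0 : forall x, 0 <= f x)
  (hf_neg : forall x, x < 0 -> f x = 0)
  (hf_1 : (\int[@lebesgue_measure R]_x (f x)%:E = 1)%E)
  (hf_supp : connected (density_support f))
  (hf_mean_int : (@lebesgue_measure R).-integrable setT (fun x => (x * f x)%:E))
  (hf_mean_ne0 : (\int[@lebesgue_measure R]_x (x * f x)%:E != 0)%E)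
  (* Markov chain of labels *)
  (hpi0_ge0 : forall z, 0 <= pi0 z)
  (hpi0_1 : \sum_z pi0 z = 1)
  (hPm_ge0 : forall a b, 0 <= Pm a b)
  (hPm_1 : forall a, \sum_b Pm a b = 1)
  (hPm_irr : irreducible Pm)
  (hPm_diag : forall a, 0 < Pm a a)
  (* joint law: i.i.d. inter-arrivals with density f, independent of the
     Markov chain Z with initial law pi0 and transition matrix Pm *)
  (hlaw : forall (n : nat) (B : nat -> set R) (z : nat -> 'I_(K + T)),
     (forall i, measurable (B i)) ->
     P [set w | (forall i, (0 < i <= n)%N -> B i (A i w - A i.-1 w)) /\
                (forall i, (i <= n)%N -> Z i w = z i)]
     = (\prod_(1 <= i < n.+1) \int[@lebesgue_measure R]_(x in B i) (f x)%:E
        * (pi0 (z 0%N) * \prod_(i < n) Pm (z i) (z i.+1))%:E)%E)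
  (* labels *)
  (hlab_rec : forall l w (k : 'I_K), c l w = inl k <-> Z l w = lshift T k)
  (hlab_rare : forall l w (t : 'I_T),
     (exists j, c l w = inr (t, j)) <-> Z l w = rshift K t)
  (* R-rarity condition, R = ||L||_oo *)
  (hrare : forall (t : 'I_T) (N : nat -> nat),
     (fun m : nat => (N m)%:R / Num.sqrt (m%:R) : R) @ \oo --> +oo ->
     {ae P, forall w,
        (fun m : nat => (N m)%:R^-1 *
           \sum_(m <= l < (m + N m).+1)
              (beta (A^~ w) (c^~ w) t l (supnorm L))%:R : R) @ \oo --> 0})
  (* fixed TTL vectors theta <= L, theta^s <= L *)
  (htheta : forall t, 0 <= theta t <= L t)
  (hthetas : forall t, 0 <= thetas t <= L t) :
  {ae P, forall w,
     (fun n : nat => n%:R^-1 *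
        \sum_(1 <= l < n.+1)
          (is_rare (c l w) && Yhit ty theta thetas (A^~ w) (c^~ w) l)%:R : R)
       @ \oo --> 0}.
Proof.
have nondecr := ae_foralln (arrivals_nondecreasing_ae hAmeas hZmeas hf_neg hlaw).
have windows := filter_forall (ae_filter_ringOfSetsType P)
  (fun t => hrare t _ (@natr_sqr_div_sqrt_cvgy R)).
have TTL_le (th : 'I_T -> R) : (forall t, 0 <= th t <= L t) -> forall t, th t <= supnorm L.
  by move=> th_le t; case/andP: (th_le t) => _ /le_trans; apply; exact: le_supnorm.
near=> w; apply: (@cesaro_cvg0_from_windows _ _ _
  (fun t l => beta (A^~ w) (c^~ w) t l (supnorm L))).
- move=> l /andP[rare hit]; exists (objtype ty (c l w)).
  apply: rare_hit_beta rare hit; [exact: TTL_le | exact: TTL_le |].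
  by near: w; exact: nondecr.
- by near: w; exact: windows.
Unshelve. all: by end_near.
Qed.
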